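(* Let $\Omega=\{\omega_1,\dots,\omega_N\}$ be a finite set with probabilities $p_i\in(0,1]$, $\sum_{i=1}^N p_i=1$. Let $C\in\mathbb{R}^{d\times n}$, $A\in\mathbb{R}^{k\times n}$, $b\in\mathbb{R}^k$, and for each $i$ let $Q_i\in\mathbb{R}^{d\times m}$, $T_i\in\mathbb{R}^{\ell\times n}$, $W_i\in\mathbb{R}^{\ell\times m}$, $u^i\in\mathbb{R}^\ell$. Let $S\subseteq\mathbb{R}^{n+Nm}$ be the set of all $z=(x,y^1,\dots,y^N)$ with $x\in\mathbb{R}^n$, $y^i\in\mathbb{R}^m$, $Ax=b$, $T_ix+W_iy^i=u^i$ for $i=1,\dots,N$, and $x\ge 0$, $y^1,\dots,y^N\ge 0$, and let $Pz := Cx+\sum_{i=1}^N p_iQ_iy^i$. Suppose $\bar z=(\bar x,\bar y^1,\dots,\bar y^N)\in S$ is a minimizer of the multi-objective linear program ''minimize $Pz$ subject to $z\in S$''. Then for every $i\in\{1,\dots,N\}$, $\bar y^i$ is a minimizer of the multi-objective linear program ''minimize $C\bar x+Q_iy$ subject to $W_iy=u^i-T_i\bar x$, $y\ge 0$, $y\in\mathbb{R}^m$''.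
   Context: Objective values in $\mathbb{R}^d$ are ordered componentwise (ordering cone $\mathbb{R}^d_+$). For a multi-objective linear program ''minimize $Mw$ subject to $w\in D$'' (with $D$ a polyhedral feasible set and $M$ a matrix), its upper image is $\bigcup_{w\in D}\{Mw\}+\mathbb{R}^d_+$; a point $\bar v$ of the upper image is minimal if there is no $v$ in the upper image with $v\in\{\bar v\}-(\mathbb{R}^d_+\setminus\{0\})$; a feasible $\bar w\in D$ is a minimizer if $M\bar w$ is minimal in the upper image. *)

From HB Require Import structures.
From mathcomp Require Import all_boot all_order all_algebra.
Set Implicit Arguments. Unset Strict Implicit. Unset Printing Implicit Defensive.
Import Order.TTheory GRing.Theory Num.Theory.
Local Open Scope ring_scope.

Definition vnonneg (R : realFieldType) (d : nat) (u : 'cV[R]_d) : Prop :=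
  forall i : 'I_d, 0 <= u i 0.

Definition upper_image (R : realFieldType) (d : nat) (V : Type)
    (D : V -> Prop) (F : V -> 'cV[R]_d) : 'cV[R]_d -> Prop :=
  fun v => exists w, D w /\ exists c : 'cV[R]_d, vnonneg c /\ v = F w + c.

Definition minimal_in (R : realFieldType) (d : nat)
    (U : 'cV[R]_d -> Prop) (vbar : 'cV[R]_d) : Prop :=
  U vbar /\
  ~ (exists v, U v /\ exists c : 'cV[R]_d, vnonneg c /\ c <> 0 /\ v = vbar - c).

Definition minimizer (R : realFieldType) (d : nat) (V : Type)
    (D : V -> Prop) (F : V -> 'cV[R]_d) (wbar : V) : Prop :=
  D wbar /\ minimal_in (upper_image D F) (F wbar).

From HB Require Import structures.
From mathcomp Require Import all_boot all_order all_algebra.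
Import Order.TTheory GRing.Theory Num.Theory.
Local Open Scope ring_scope.

(* The scenarios of the two-stage program are coupled only through the first
   stage x.  If the recourse problem of scenario i had a feasible y whose cost
   is [C xbar + Q_i ybar^i - c] with c >= 0, c <> 0, then replacing ybar^i by y
   in zbar stays feasible and lowers the expected cost P by [p_i c], which is
   again nonnegative and nonzero because p_i > 0: zbar would not be minimal. *)

Section NonnegVectors.

Variables (R : realFieldType) (d : nat).
Implicit Types (a : R) (c : 'cV[R]_d).

Lemma vnonneg0 : vnonneg (0 : 'cV[R]_d).
Proof. by move=> j; rewrite mxE. Qed.

Lemma vnonnegD c c' : vnonneg c -> vnonneg c' -> vnonneg (c + c').
Proof. by move=> hc hc' j; rewrite mxE addr_ge0. Qed.

Lemma vnonnegZ a c : 0 <= a -> vnonneg c -> vnonneg (a *: c).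
Proof. by move=> ha hc j; rewrite mxE mulr_ge0. Qed.

Lemma vnonneg_addr_eq0 c c' : vnonneg c -> vnonneg c' ->
  (c + c' == 0) = (c == 0) && (c' == 0).
Proof.
move=> hc hc'; apply/idP/idP => [/eqP/matrixP sum0 | /andP[/eqP-> /eqP->]].
  have entry0 j : c j 0 = 0 /\ c' j 0 = 0.
    by have /eqP := sum0 j 0; rewrite !mxE paddr_eq0 // => /andP[/eqP-> /eqP->].
  by apply/andP; split; apply/eqP/matrixP => j k; rewrite [k]ord1 !mxE;
    case: (entry0 j).
by rewrite addr0.
Qed.

End NonnegVectors.

Section Minimizers.

Variables (R : realFieldType) (d : nat) (V : Type).
Variables (D : V -> Prop) (F : V -> 'cV[R]_d).

Definition dominated (wbar : V) : Prop :=
  exists w c, D w /\ vnonneg c /\ c <> 0 /\ F w = F wbar - c.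

Lemma minimizerE wbar : minimizer D F wbar <-> D wbar /\ ~ dominated wbar.
Proof.
split=> [[Dwbar [_ not_below]] | [Dwbar undominated]].
  split=> // -[w [c [Dw [hc [c_neq0 Fw]]]]]; apply: not_below.
  exists (F w); split; last by exists c.
  by exists w; split=> //; exists 0; rewrite addr0; split=> //; apply: vnonneg0.
split=> //; split.
  by exists wbar; split=> //; exists 0; rewrite addr0; split=> //; apply: vnonneg0.
move=> [_ [[w [Dw [c' [hc' ->]]]] [c [hc [c_neq0 Fwc']]]]].
apply: undominated; exists w, (c + c'); split=> //; split; first exact: vnonnegD.
split; last by rewrite opprD addrA -Fwc' addrK.
by apply/eqP; rewrite vnonneg_addr_eq0 // negb_and; apply/orP; left; apply/eqP.
Qed.

End Minimizers.

Lemma big_ord_update (V : zmodType) (N : nat) (F G : 'I_N -> V) (i : 'I_N) :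
  (forall j, j != i -> G j = F j) ->
  \sum_(j < N) G j = \sum_(j < N) F j + (G i - F i).
Proof.
move=> eqGF; rewrite (bigD1 i) //= [in RHS](bigD1 i) //= (eq_bigr F) //.
by rewrite [RHS]addrAC [F i + _]addrC subrK.
Qed.

Theorem proposition2p5 (R : realFieldType) (N d n m k l : nat)
    (p : 'I_N -> R)
    (hp : forall i, 0 < p i /\ p i <= 1)
    (hsum : \sum_(i < N) p i = 1)
    (C : 'M[R]_(d, n)) (A : 'M[R]_(k, n)) (b : 'cV[R]_k)
    (Q : 'I_N -> 'M[R]_(d, m)) (T : 'I_N -> 'M[R]_(l, n))
    (W : 'I_N -> 'M[R]_(l, m)) (u : 'I_N -> 'cV[R]_l)
    (xbar : 'cV[R]_n) (ybar : 'I_N -> 'cV[R]_m) :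
  let S := fun z : 'cV[R]_n * ('I_N -> 'cV[R]_m) =>
    A *m z.1 = b /\ (forall i, T i *m z.1 + W i *m z.2 i = u i) /\
    vnonneg z.1 /\ (forall i, vnonneg (z.2 i)) in
  let P := fun z : 'cV[R]_n * ('I_N -> 'cV[R]_m) =>
    C *m z.1 + \sum_(i < N) p i *: (Q i *m z.2 i) in
  minimizer S P (xbar, ybar) ->
  forall i : 'I_N,
    minimizer (fun y : 'cV[R]_m => W i *m y = u i - T i *m xbar /\ vnonneg y)
              (fun y : 'cV[R]_m => C *m xbar + Q i *m y) (ybar i).
Proof.
move=> S P /minimizerE[[hA [hT [hx hy]]] zbar_undominated] i.
apply/minimizerE; split; first by split; [rewrite -(hT i) addrC addKr | exact: hy].
move=> [y [c [[hWy hy0] [hc [c_neq0 hQy]]]]].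
have {}hQy : Q i *m y = Q i *m ybar i - c by apply: (addrI (C *m xbar)); rewrite addrA.
pose y' := @dfwith _ (fun=> 'cV[R]_m) ybar i y.
have y'_feasible j : T j *m xbar + W j *m y' j = u j /\ vnonneg (y' j).
  rewrite /y'; case: dfwithP => [| j' _]; first by rewrite hWy addrC subrK.
  by split; [apply: hT | apply: hy].
apply: zbar_undominated; exists (xbar, y'), (p i *: c); split.
  by split=> //; split=> [j | ]; last split=> // j; case: (y'_feasible j).
split; first by apply: vnonnegZ => //; apply/ltW/(hp i).1.
split; first by apply/eqP; rewrite scaler_eq0 gt_eqF ?(hp i).1 //; apply/eqP.
rewrite /P /= (@big_ord_update _ _ (fun j => p j *: (Q j *m ybar j)) _ i).
  by rewrite /y' dfwith_in hQy -scalerBr addrAC subrr add0r scalerN addrA.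
by move=> j ji; rewrite /y' dfwith_out // eq_sym.
Qed.
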